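(* There is an absolute constant $C>0$ such that for every $n$ there exist responsibilities $(b_1,\ldots,b_n)$ (and a number $m$ of chores) for which every picking sequence $\pi\in[n]^m$ satisfies at least one of the following: (a) there are agents $p,q$ with $b_p<b_q$ and an additive disvaluation $c_p$ under which the risk averse agent $p$ envies $q$, i.e. $\sum_{r\in R_p}c_p(e_{m-r+1})>\sum_{r\in R_q}c_p(e_{m-r+1})$; or (b) there are an agent $i$ and additive disvaluations under which agent $i$, following the greedy picking strategy, may receive a bundle of disvalue at least $(2-C/n)\,APS_i$.
   Context: Chores are indivisible and disvaluations additive and nonnegative. In a picking sequence, in round $r$ agent $\pi_r$ takes one remaining chore; $R_p$ is the set of rounds of agent $p$; chores are indexed so that $c_p(e_1)\ge\cdots\ge c_p(e_m)$. Greedy strategy: take a remaining chore of smallest own disvalue. $APS_i=\max_p\min\{c_i(S):\sum_{e\in S}p_e\ge b_i\}$ over nonnegative price vectors summing to $1$. *)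

From mathcomp Require Import all_boot all_order all_algebra.
From mathcomp Require Import classical_sets reals.
Set Implicit Arguments. Unset Strict Implicit. Unset Printing Implicit Defensive.
Import Order.TTheory GRing.Theory Num.Theory.
Local Open Scope ring_scope.

(* Agents are 'I_n, chores are 'I_m, rounds are 'I_m (round r+1 of the paper
   is the ordinal r). *)

Section Defs.
Variable R : realType.

Definition disval (m : nat) (c : 'I_m -> R) : Prop := forall e, 0 <= c e.

Definition cost (m : nat) (c : 'I_m -> R) (S : {set 'I_m}) : R :=
  \sum_(e in S) c e.

Definition price_simplex (m : nat) : set ('I_m -> R) :=
  [set p | (forall e, 0 <= p e) /\ \sum_e p e = 1].

(* The set [set: 'I_m] is always included as a
   candidate (neutral element); it is feasible whenever b <= 1, which holds
   for all responsibilities considered (positive, summing to 1). *)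
Definition aps_val (m : nat) (c : 'I_m -> R) (b : R) (p : 'I_m -> R) : R :=
  \big[Num.min/cost c [set: 'I_m]]_(S : {set 'I_m} | b <= \sum_(e in S) p e)
     cost c S.

Definition APS (m : nat) (c : 'I_m -> R) (b : R) : R :=
  sup [set aps_val c b p | p in @price_simplex m].

(* s lists the chores in nonincreasing order of c: e_(k+1) = s k, i.e.
   c(e_1) >= ... >= c(e_m). *)
Definition sorting (m : nat) (c : 'I_m -> R) (s : 'I_m -> 'I_m) : Prop :=
  injective s /\ forall i j : 'I_m, (i <= j)%N -> c (s j) <= c (s i).

(* With 0-indexed rounds r, e_{m-r+1} (1-indexed r) is s (rev_ord r). *)
Definition risk_averse_envies (n m : nat) (pi : 'I_m -> 'I_n)
    (c : 'I_m -> R) (p q : 'I_n) : Prop :=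
  exists s, sorting c s /\
    \sum_(r : 'I_m | pi r == q) c (s (rev_ord r))
      < \sum_(r : 'I_m | pi r == p) c (s (rev_ord r)).

(* An execution of pi: pick r is the chore taken in round r (all distinct). *)
Definition execution (m : nat) (pick : 'I_m -> 'I_m) : Prop := injective pick.

Definition greedy_for (n m : nat) (pi : 'I_m -> 'I_n) (i : 'I_n)
    (ci : 'I_m -> R) (pick : 'I_m -> 'I_m) : Prop :=
  forall r : 'I_m, pi r = i ->
    forall e : 'I_m, (forall r' : 'I_m, (r' < r)%N -> pick r' != e) ->
      ci (pick r) <= ci e.

Definition bundle (n m : nat) (pi : 'I_m -> 'I_n) (pick : 'I_m -> 'I_m)
    (i : 'I_n) : {set 'I_m} :=
  [set pick r | r in [set r : 'I_m | pi r == i]].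

End Defs.

From mathcomp Require Import all_boot all_order all_algebra.
From mathcomp Require Import classical_sets reals.
From mathcomp Require Import ring lra zify.
Import Order.TTheory GRing.Theory Num.Theory.
Set Implicit Arguments. Unset Strict Implicit. Unset Printing Implicit Defensive.
Local Open Scope ring_scope.

(* Take n = h + 2 agents with b_0 = 1/(h+1) and b_j = h/(h+1)^2 for j <> 0, and
   m = n h + 1 chores.  If agent 0 does not own the last round, its owner p has
   b_p < b_0 and envies 0 when only the largest chore e_1 has positive
   disvaluation: a risk-averse p pictures itself receiving e_1 in its last round.
   If some agent owns more rounds than agent 0, it envies 0 for identical
   disvaluations.  Otherwise agent 0 owns the last round and at least h + 1
   rounds.  Let it value the last chore at 1 and every other chore at 1/n.  Its
   APS is 1: the chores split into h + 1 blocks of disvalue at most 1, one of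
   which has price at least b_0.  Yet greedily taking a cheapest chore in every
   round leaves it the heavy chore at the end, for a total of at least
   1 + h/n = 2 - 2/n.  For n <= 2 the factor 2 - 4/n is nonpositive, so any
   instance works. *)

Lemma exists_ge_of_sum_ge (R : realDomainType) (I : finType) (F : I -> R) x :
  (0 < #|I|)%N -> x *+ #|I| <= \sum_i F i -> exists i, x <= F i.
Proof.
move=> /card_gt0P[i0 _] le_sum.
case: (pickP (fun i => x <= F i)) => [i ? | lt_x]; first by exists i.
suff : \sum_i F i < x *+ #|I| by rewrite ltNge le_sum.
rewrite -sumr_const; apply: ltr_sum => [|i _]; last by rewrite ltNge lt_x.
by apply/hasP; exists i0; rewrite ?mem_index_enum.
Qed.

Section APSBounds.
Variables (R : realType) (m : nat).
Implicit Types (c p : 'I_m -> R) (b : R) (e : 'I_m) (S : {set 'I_m}).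

Definition point_price (e0 : 'I_m) : 'I_m -> R := fun e => (e == e0)%:R.

Lemma point_price_simplex (e0 : 'I_m) : price_simplex (point_price e0).
Proof.
split=> [e|]; first exact: ler0n.
by rewrite (bigD1 e0) //= big1 => [|e /negbTE ne]; rewrite /point_price ?eqxx ?ne ?addr0.
Qed.

Lemma point_price_sum (e0 : 'I_m) S : \sum_(e in S) point_price e0 e = (e0 \in S)%:R.
Proof.
have [e0S|e0S] := boolP (e0 \in S); last first.
  by rewrite big1 // => e eS; rewrite /point_price; case: eqP eS => // ->; rewrite (negbTE e0S).
rewrite (bigD1 e0) //= big1 => [|e /andP[_ /negbTE ne]]; by rewrite /point_price ?eqxx ?ne ?addr0.
Qed.

Lemma aps_val_le_cost c b p S : b <= \sum_(e in S) p e -> aps_val c b p <= cost c S.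
Proof. exact: bigmin_le_cond. Qed.

Lemma has_sup_aps_val c b (e0 : 'I_m) : has_sup [set aps_val c b p | p in @price_simplex R m].
Proof.
split.
  by exists (aps_val c b (point_price e0)), (point_price e0) => //; exact: point_price_simplex.
by exists (cost c [set: 'I_m]) => _ [p _ <-]; exact: bigmin_le_id.
Qed.

Lemma cost_ge_mem c S e : disval c -> e \in S -> c e <= cost c S.
Proof. by move=> c_ge0 eS; rewrite /cost (bigD1 e) //= lerDl sumr_ge0. Qed.

Lemma le_APS c b (e0 : 'I_m) : disval c -> 0 < b -> c e0 <= APS c b.
Proof.
move=> c_ge0 b_gt0; apply: le_trans (sup_upper_bound (has_sup_aps_val c b e0) _); last first.
  by exists (point_price e0) => //; exact: point_price_simplex.
apply: le_bigmin => [|S]; first by rewrite cost_ge_mem ?inE.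
rewrite point_price_sum; case: (e0 \in S) / boolP => [e0S _|_]; first exact: cost_ge_mem.
by rewrite leNgt b_gt0.
Qed.

Lemma APS_le_partition k c b (f : 'I_m -> 'I_k.+1) T : (0 < m)%N ->
  b *+ k.+1 <= 1 -> (forall j, cost c [set e | f e == j] <= T) -> APS c b <= T.
Proof.
move=> m_gt0 b_small group_le; apply: ge_sup.
  by case: (has_sup_aps_val c b (Ordinal m_gt0)).
move=> _ [p [_ p_sum] <-].
have [j le_b] : exists j, b <= \sum_(e in [set e | f e == j]) p e.
  apply: exists_ge_of_sum_ge; rewrite card_ord // (le_trans b_small) // -p_sum.
  by rewrite (partition_big f predT) //=; under [leRHS]eq_bigr do under eq_bigl do rewrite inE.
exact: le_trans (aps_val_le_cost _ le_b) (group_le j).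
Qed.

End APSBounds.

Section Rounds.
Variables (R : realType) (n m : nat) (pi : 'I_m -> 'I_n).

Definition rounds (j : 'I_n) : nat := #|[set r | pi r == j]|.

Lemma sum1_rounds j : \sum_(r | pi r == j) (1 : R) = (rounds j)%:R.
Proof. by rewrite -sumr_const; apply: eq_bigl => r; rewrite inE. Qed.

Lemma sum_rounds : \sum_j rounds j = m.
Proof.
rewrite -[RHS]card_ord -sum1_card (partition_big pi predT) //=.
by apply: eq_bigr => j _; rewrite /rounds -sum1_card; apply: eq_bigl => r; rewrite inE.
Qed.

Lemma le_mul_max_rounds i : (forall j, rounds j <= rounds i)%N -> (m <= n * rounds i)%N.
Proof.
move=> le_i; rewrite -sum_rounds (@leq_trans (\sum_(j < n) rounds i)) ?leq_sum //.
by rewrite sum_nat_const card_ord.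
Qed.

Lemma envies_of_more_rounds p q :
  (rounds q < rounds p)%N -> risk_averse_envies pi (fun=> 1 : R) p q.
Proof. by move=> lt_qp; exists id; split; [by split | rewrite !sum1_rounds ltr_nat]. Qed.

End Rounds.

Lemma rev_ord_eq0 m (r : 'I_m.+1) : (rev_ord r == ord0) = (r == ord_max).
Proof.
have lt_r := ltn_ord r.
by apply/eqP/eqP => /(congr1 val) /= eq_r; apply: val_inj => /=; lia.
Qed.

Lemma envies_of_last_round (R : realType) n m (pi : 'I_m.+1 -> 'I_n) p q :
  pi ord_max = p -> p != q -> risk_averse_envies pi (fun e => (e == ord0)%:R : R) p q.
Proof.
move=> last_p neq_pq; exists id; split.
  split=> // i j le_ij; case: eqP => [j0 | _]; last exact: ler0n.
  suff -> : i = ord0 by rewrite eqxx.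
  by apply: val_inj; move: le_ij; rewrite j0 /=; lia.
under eq_bigr => r _ do rewrite rev_ord_eq0; under [ltRHS]eq_bigr => r _ do rewrite rev_ord_eq0.
rewrite big1 => [|r /eqP pi_r]; last first.
  by case: eqP => // r_last; case/eqP: neq_pq; rewrite -pi_r r_last.
by rewrite (bigD1 ord_max) /= ?last_p ?eqxx // ltr_pwDl ?sumr_ge0.
Qed.

Lemma card_divn_eq m d j : (0 < d)%N -> (#|[set e : 'I_m | (e %/ d == j)%N]| <= d)%N.
Proof.
move=> d_gt0; rewrite cardE -(size_map val) -[X in (_ <= X)%N](size_iota (j * d)).
apply: uniq_leq_size; first by rewrite map_inj_uniq ?enum_uniq //; exact: val_inj.
move=> x /mapP[e]; rewrite mem_enum inE => /eqP e_j ->; rewrite mem_iota.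
suff : (j * d <= e < j * d + d)%N by [].
have := divn_eq e d; have := ltn_pmod e d_gt0; rewrite e_j; nia.
Qed.

Definition lower_envies_higher (R : realType) n m (b : 'I_n -> R) (pi : 'I_m -> 'I_n) : Prop :=
  exists p q (cp : 'I_m -> R), b p < b q /\ disval cp /\ risk_averse_envies pi cp p q.

Definition greedy_exceeds_APS (R : realType) n m (C : R) (b : 'I_n -> R) (pi : 'I_m -> 'I_n) :
    Prop :=
  exists i (ci : 'I_m -> R) (pick : 'I_m -> 'I_m),
    disval ci /\ 0 < APS ci (b i) /\ execution pick /\ greedy_for pi i ci pick /\
    (2 - C / n%:R) * APS ci (b i) <= cost ci (bundle pi pick i).

Section SpikeInstance.
Variables (R : realType) (h : nat).
Hypothesis h_gt0 : (0 < h)%N.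
Local Notation n := h.+2.
Local Notation m := (n * h).+1.
Implicit Types (e : 'I_m) (S : {set 'I_m}).

Definition resp (i : 'I_n) : R := if i == ord0 then h.+1%:R^-1 else h%:R / h.+1%:R ^+ 2.

Lemma resp_gt0 i : 0 < resp i.
Proof. by rewrite /resp; case: eqP => _; rewrite ?divr_gt0 ?invr_gt0 ?exprn_gt0 ?ltr0n. Qed.

Lemma sum_resp : \sum_i resp i = 1.
Proof.
rewrite big_ord_recl /resp eqxx.
rewrite (eq_bigr (fun=> h%:R / h.+1%:R ^+ 2)) // sumr_const card_ord -[_ / _ *+ _]mulr_natl -natr1.
by field; rewrite natr1 pnatr_eq0.
Qed.

Lemma resp_lt_resp0 i : i != ord0 -> resp i < resp ord0.
Proof.
move=> /negbTE i_neq0; rewrite /resp i_neq0 eqxx.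
by rewrite ltr_pdivrMr ?exprn_gt0 ?ltr0n // expr2 mulrA mulVf ?pnatr_eq0 // mul1r ltr_nat.
Qed.

Definition spike (e : 'I_m) : R := if e == ord_max then 1 else n%:R^-1.

Lemma spike_ge0 : disval spike.
Proof. by move=> e; rewrite /spike; case: eqP => _; rewrite ?invr_ge0 ?ler0n. Qed.

Lemma greedy_spike (pi : 'I_m -> 'I_n) i : greedy_for pi i spike id.
Proof.
move=> r _ e not_taken; rewrite /spike.
have le_re : (r <= e)%N.
  by rewrite leqNgt; apply/negP => lt_er; move: (not_taken e lt_er); rewrite eqxx.
case: (eqVneq r ord_max) => [r_max | _]; last by case: eqP => _; rewrite ?invf_le1 ?ler1n ?ltr0n.
suff -> : e = ord_max by rewrite eqxx.
by apply: val_inj; move: le_re (ltn_ord e); rewrite r_max /=; lia.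
Qed.

Lemma cost_spike_notin S : ord_max \notin S -> cost spike S = #|S|%:R / n%:R.
Proof.
move=> notin; rewrite /cost (eq_bigr (fun=> n%:R^-1)) => [|e eS]; last first.
  by rewrite /spike; case: eqP eS => // ->; rewrite (negbTE notin).
by rewrite sumr_const mulr_natl.
Qed.

Lemma cost_spike_mem S : ord_max \in S -> cost spike S = 1 + #|S :\ ord_max|%:R / n%:R.
Proof.
move=> inS; rewrite /cost (big_setD1 ord_max) //= -/(cost _ _) cost_spike_notin ?setD11 //.
by rewrite /spike eqxx.
Qed.

Lemma spike_block_cost (j : nat) : cost spike [set e : 'I_m | (e %/ n == j)%N] <= 1.
Proof.
have [inS | notin] := boolP (ord_max \in [set e : 'I_m | (e %/ n == j)%N]); last first.
  by rewrite cost_spike_notin // ler_pdivrMr ?ltr0n // mul1r ler_nat card_divn_eq.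
rewrite cost_spike_mem // eq_card0 ?mul0r ?addr0 // => e.
rewrite !inE; apply/negP => /andP[/eqP e_max /eqP e_j].
move: inS; rewrite inE /= mulKn // => /eqP j_h.
have := leq_divM e n; have := ltn_ord e; rewrite e_j -j_h => le_e ge_e.
by apply: e_max; apply: val_inj => /=; nia.
Qed.

Definition chore_block (e : 'I_m) : 'I_h.+1 := inord (e %/ n).

Lemma chore_blockE e j : (chore_block e == j) = (e %/ n == j)%N.
Proof.
rewrite /chore_block -(inj_eq val_inj) /= inordK // ltn_divLR //.
by have := ltn_ord e; nia.
Qed.

Lemma APS_spike : APS spike (resp ord0) = 1.
Proof.
apply/le_anti/andP; split; last first.
  by have := le_APS ord_max spike_ge0 (resp_gt0 ord0); rewrite /spike eqxx.
apply: (APS_le_partition (f := chore_block)) => // [|j].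
  by rewrite /resp eqxx -[_^-1 *+ _]mulr_natr mulVf ?pnatr_eq0.
have -> : [set e | chore_block e == j] = [set e : 'I_m | (e %/ n == j)%N].
  by apply/setP => e; rewrite !inE chore_blockE.
exact: spike_block_cost.
Qed.

Lemma spike_bundle_cost (pi : 'I_m -> 'I_n) i : pi ord_max = i ->
  (forall j, rounds pi j <= rounds pi i)%N -> 2 - 2 / n%:R <= cost spike (bundle pi id i).
Proof.
move=> last_i most_i.
have lt_h : (h < rounds pi i)%N by have := le_mul_max_rounds most_i; nia.
rewrite /bundle imset_id cost_spike_mem ?inE ?last_i //.
have -> : 2 - 2 / n%:R = 1 + h%:R / n%:R :> R.
  by rewrite -addn2 natrD; field; rewrite -natrD pnatr_eq0 addn_eq0.
rewrite lerD2l ler_wpM2r ?invr_ge0 ?ler0n // ler_nat.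
by move: lt_h; rewrite /rounds (cardsD1 ord_max) inE last_i eqxx.
Qed.

Lemma spike_instance (pi : 'I_m -> 'I_n) :
  lower_envies_higher resp pi \/ greedy_exceeds_APS 4 resp pi.
Proof.
have [last0 | last_ne0] := eqVneq (pi ord_max) ord0; last first.
  left; exists (pi ord_max), ord0, (fun e => (e == ord0)%:R).
  by split; [exact: resp_lt_resp0 | split; [move=> e; exact: ler0n | exact: envies_of_last_round]].
case: (pickP (fun j => rounds pi ord0 < rounds pi j)%N) => [j more_j | most0].
  left; exists j, ord0, (fun=> 1); split; last by split=> //; exact: envies_of_more_rounds.
  by apply: resp_lt_resp0; apply: contraTneq more_j => ->; rewrite ltnn.
right; exists ord0, spike, id; split; first exact: spike_ge0.
rewrite APS_spike mulr1; split=> //; split=> //; split; first exact: greedy_spike.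
apply: le_trans (spike_bundle_cost last0 _); last by move=> j; rewrite leqNgt most0.
by rewrite lerD2l lerN2 ler_wpM2r ?invr_ge0 ?ler0n // ler_nat.
Qed.

End SpikeInstance.

Lemma small_instance (R : realType) n : (0 < n)%N -> (n <= 2)%N ->
  exists m (b : 'I_n -> R), (forall i, 0 < b i) /\ \sum_i b i = 1 /\
    forall pi : 'I_m -> 'I_n, greedy_exceeds_APS 4 b pi.
Proof.
move=> n_gt0 n_le2; have n_gt0R : 0 < n%:R :> R by rewrite ltr0n.
exists 1%N, (fun=> n%:R^-1); split; first by move=> _; rewrite invr_gt0.
split; first by rewrite sumr_const card_ord -[_ *+ n]mulr_natr mulVf ?gt_eqF.
move=> pi; exists (pi ord0), (fun=> 1), id.
have APS_ge1 : 1 <= APS (fun _ : 'I_1 => 1 : R) n%:R^-1.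
  by apply: (le_APS ord0) => //; rewrite invr_gt0.
split=> //; split; first exact: lt_le_trans ltr01 APS_ge1.
split=> //; split=> //; apply: le_trans (sumr_ge0 _ _) => //.
apply: mulr_le0_ge0; last exact: le_trans ler01 APS_ge1.
rewrite subr_le0 ler_pdivlMr //; rewrite -(ler_nat R) in n_le2; lra.
Qed.

Theorem proposition7 (R : realType) :
  exists C : R, 0 < C /\
  forall n : nat, (0 < n)%N ->
  exists (m : nat) (b : 'I_n -> R),
    (forall i, 0 < b i) /\ \sum_i b i = 1 /\
    forall pi : 'I_m -> 'I_n,
      (* (a) *)
      (exists (p q : 'I_n) (cp : 'I_m -> R),
          b p < b q /\ disval cp /\ risk_averse_envies pi cp p q)
      \/
      (* (b) *)
      (exists (i : 'I_n) (ci : 'I_m -> R) (pick : 'I_m -> 'I_m),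
          disval ci /\ 0 < APS ci (b i) /\
          execution pick /\ greedy_for pi i ci pick /\
          (2 - C / n%:R) * APS ci (b i) <= cost ci (bundle pi pick i)).
Proof.
exists 4; split=> [|n n_gt0]; first by rewrite ltr0n.
have [n_le2 | n_gt2] := leqP n 2.
  have [m [b [b_gt0 [b_sum greedy_gap]]]] := small_instance R n_gt0 n_le2.
  by exists m, b; split=> //; split=> // pi; right; exact: greedy_gap.
case: n n_gt0 n_gt2 => [|[|[|h]]] // _ _.
exists (h.+3 * h.+1).+1, (@resp R h.+1).
by split; [exact: resp_gt0 | split; [exact: sum_resp | exact: spike_instance]].
Qed.
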